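(* Let $n\ge1$, $V=(\mathbb F_2)^n$, let $\rho\in\mathrm{Sym}(V)$ with $0\rho=0$, and let $\bar\rho$ be the corresponding Feistel operator. For $i=1,2$ let $A_i, D_i$ be subgroups of $V$ and let $\varphi_i:A_i\to V$ be a group homomorphism, and set \[ \mathcal U_i=\{(a,\ a\varphi_i+d)\mid a\in A_i,\ d\in D_i\}\le V\times V. \] Suppose $\mathcal U_1\bar\rho=\mathcal U_2$. Then: \begin{enumerate} \item $\mathrm{Ker}\,\varphi_1\le D_2$; \item $D_2\le A_1$; \item $A_2=A_1\varphi_1+D_1$; \item $D_2\varphi_1\le D_1$. \end{enumerate} Moreover, \begin{itemize} \item[(i)] if $D_1=\{0\}$ and $D_2=\{0\}$, then $\rho$ is linear on $A_2$, i.e. $(x+y)\rho=x\rho+y\rho$ for all $x,y\in A_2$; \item[(ii)] if $\mathcal U_1=A_1\times D_1$ and $\mathcal U_2=A_2\times D_2$, then $D_1=A_2$ and $D_2=A_1$. \end{itemize}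
   Context: Maps act on the right; $+$ is bitwise XOR. For $\rho\in\mathrm{Sym}(V)$, the Feistel operator induced by $\rho$ is $\bar\rho:V\times V\to V\times V$, $(x_1,x_2)\bar\rho=(x_2,\ x_1+x_2\rho)$. For a set $S$ and a map $f$, $Sf=\{sf\mid s\in S\}$. *)

From HB Require Import structures.
From mathcomp Require Import all_boot all_order all_algebra all_fingroup.
Set Implicit Arguments. Unset Strict Implicit. Unset Printing Implicit Defensive.
Import GRing.Theory.
Local Open Scope ring_scope.

Notation Vn n := 'rV['F_2]_n.

Definition addsubgroup (n : nat) (A : {set Vn n}) : Prop :=
  0 \in A /\ (forall x y, x \in A -> y \in A -> x - y \in A).

(* phi : A -> V is a group homomorphism (phi is given as a total function on V;
   only its values on A matter). *)
Definition hom_on (n : nat) (A : {set Vn n}) (phi : Vn n -> Vn n) : Prop :=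
  forall x y, x \in A -> y \in A -> phi (x + y) = phi x + phi y.

Definition kerA (n : nat) (A : {set Vn n}) (phi : Vn n -> Vn n) : {set Vn n} :=
  [set a in A | phi a == 0].

Definition setsum (n : nat) (S T : {set Vn n}) : {set Vn n} :=
  [set s + t | s in S, t in T].

Definition Uset (n : nat) (A D : {set Vn n}) (phi : Vn n -> Vn n)
  : {set Vn n * Vn n} :=
  [set (a, phi a + d) | a in A, d in D].

Definition feistel (n : nat) (rho : {perm Vn n}) (x : Vn n * Vn n) : Vn n * Vn n :=
  (x.2, x.1 + rho x.2).

(** Write [U1 = Uset A1 D1 phi1] and [U2 = Uset A2 D2 phi2]. One has
    [(u, v) \in U1] iff [u \in A1] and [v - u phi1 \in D1], and since the
    Feistel operator is a bijection the hypothesis says exactly that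
    [(u, v) \in U1] iff [(v, u + v rho) \in U2].  Every claim is obtained
    by specialising this equivalence: [v = 0] identifies [D2] with [{u \in A1 | u phi1 \in D1}];
    choosing [u := v phi2 - v rho] realises any [v \in A2] as [u phi1 + d];
    when [D1 = D2 = 0] the same choice of [u] is additive in [v], which forces
    [rho] to be additive on [A2]. *)

From HB Require Import structures.
From mathcomp Require Import all_boot all_order all_algebra all_fingroup.
Import GRing.Theory.
Set Implicit Arguments. Unset Strict Implicit.
Local Open Scope ring_scope.

Section AdditiveSubgroups.
Variables (n : nat) (A : {set Vn n}).
Hypothesis hA : addsubgroup A.

Lemma addsubgroup0 : 0 \in A.
Proof. by case: hA. Qed.

Lemma addsubgroupN x : x \in A -> - x \in A.
Proof. by case: hA => h0 hB hx; rewrite -sub0r hB. Qed.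

Lemma addsubgroupD x y : x \in A -> y \in A -> x + y \in A.
Proof. by case: hA => _ hB hx hy; rewrite -[y]opprK hB ?addsubgroupN. Qed.

Lemma hom_on0 (phi : Vn n -> Vn n) : hom_on A phi -> phi 0 = 0.
Proof.
move=> hphi; apply: (@addrI _ (phi 0)).
by rewrite -hphi ?addsubgroup0 // !addr0.
Qed.

End AdditiveSubgroups.

Lemma mem_Uset n (A D : {set Vn n}) phi u v :
  ((u, v) \in Uset A D phi) = (u \in A) && (v - phi u \in D).
Proof.
apply/imset2P/andP => [[a d ha hd [-> ->]] | [hu hv]].
  by rewrite (addrC (phi a)) addrK.
by apply: (Imset2spec hu hv); rewrite addrC subrK.
Qed.

Lemma feistel_inj n (rho : {perm Vn n}) : injective (feistel rho).
Proof. by move=> [x1 x2] [y1 y2] [<- /addIr <-]. Qed.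

Section FeistelImage.
Variables (n : nat) (rho : {perm Vn n}).
Hypothesis hrho0 : rho 0 = 0.
Variables (A1 D1 A2 D2 : {set Vn n}) (phi1 phi2 : Vn n -> Vn n).
Hypotheses (hA1 : addsubgroup A1) (hD1 : addsubgroup D1).
Hypotheses (hA2 : addsubgroup A2) (hD2 : addsubgroup D2).
Hypotheses (hphi1 : hom_on A1 phi1) (hphi2 : hom_on A2 phi2).
Hypothesis hU : feistel rho @: Uset A1 D1 phi1 = Uset A2 D2 phi2.

Lemma mem_Uset_feistel u v :
  (u \in A1) && (v - phi1 u \in D1) = (v \in A2) && (u + rho v - phi2 v \in D2).
Proof.
rewrite -!mem_Uset -[(v, _)]/(feistel rho (u, v)) -hU mem_imset //.
exact: feistel_inj.
Qed.

Lemma mem_feistel_preimage v : v \in A2 ->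
  (phi2 v - rho v \in A1) /\ v - phi1 (phi2 v - rho v) \in D1.
Proof.
move=> hv; apply/andP; rewrite mem_Uset_feistel hv subrK subrr.
exact: addsubgroup0.
Qed.

Lemma D2_eq : D2 = [set u in A1 | phi1 u \in D1].
Proof.
apply/setP => u; have := mem_Uset_feistel u 0.
rewrite inE hrho0 (hom_on0 hA2 hphi2) (addsubgroup0 hA2) !subr0 addr0 sub0r /= => <-.
by congr (_ && _); apply/idP/idP => /(addsubgroupN hD1); rewrite ?opprK.
Qed.

Lemma A2_eq_setsum : A2 = setsum (phi1 @: A1) D1.
Proof.
apply/setP => v; apply/idP/imset2P => [hv | [_ d /imsetP [a ha ->] hd ->]].
  have [ha hd] := mem_feistel_preimage hv.
  by apply: (Imset2spec (imset_f _ ha) hd); rewrite addrC subrK.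
have := mem_Uset_feistel a (phi1 a + d).
by rewrite ha (addrC (phi1 a)) addrK hd => /esym/andP [].
Qed.

Lemma rho_additive_on_A2 : D1 = [set 0] -> D2 = [set 0] ->
  forall x y, x \in A2 -> y \in A2 -> rho (x + y) = rho x + rho y.
Proof.
move=> E1 E2.
have graph u v : (u \in A1) && (v == phi1 u) = (v \in A2) && (u + rho v == phi2 v).
  by have := mem_Uset_feistel u v; rewrite E1 E2 !inE !subr_eq0.
pose pre v := phi2 v - rho v.
have pre_spec v : v \in A2 -> pre v \in A1 /\ v = phi1 (pre v).
  by move=> hv; have [hu] := mem_feistel_preimage hv; rewrite E1 inE subr_eq0 => /eqP.
move=> x y hx hy; have [ux ex] := pre_spec x hx; have [uy ey] := pre_spec y hy.
have : (pre x + pre y \in A1) && (x + y == phi1 (pre x + pre y)).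
  by rewrite addsubgroupD // hphi1 // -ex -ey eqxx.
rewrite graph hphi2 // => /andP [_ /eqP /(canRL (addKr _)) ->].
by rewrite /pre opprD !opprB addrACA !subrK.
Qed.

Lemma feistel_setX_swap :
  Uset A1 D1 phi1 = setX A1 D1 -> Uset A2 D2 phi2 = setX A2 D2 -> D1 = A2 /\ D2 = A1.
Proof.
move=> E1 E2.
have prod u v : (u \in A1) && (v \in D1) = (v \in A2) && (u + rho v \in D2).
  by have := mem_Uset_feistel u v; rewrite -!mem_Uset E1 E2 !inE.
split; apply/setP => x.
  apply/idP/idP => hx.
    by have := prod 0 x; rewrite hx (addsubgroup0 hA1) => /esym /andP [].
  have := prod (- rho x) x.
  by rewrite hx addNr (addsubgroup0 hD2) => /andP [].
have := prod x 0.
by rewrite hrho0 addr0 (addsubgroup0 hD1) (addsubgroup0 hA2) andbT => ->.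
Qed.

End FeistelImage.

Theorem lemma4p6 (n : nat) (hn : (1 <= n)%N) (rho : {perm Vn n}) (hrho0 : rho 0 = 0)
  (A1 D1 A2 D2 : {set Vn n}) (phi1 phi2 : Vn n -> Vn n)
  (hA1 : addsubgroup A1) (hD1 : addsubgroup D1)
  (hA2 : addsubgroup A2) (hD2 : addsubgroup D2)
  (hphi1 : hom_on A1 phi1) (hphi2 : hom_on A2 phi2)
  (hU : feistel rho @: Uset A1 D1 phi1 = Uset A2 D2 phi2) :
  (kerA A1 phi1 \subset D2 /\
      D2 \subset A1 /\
      A2 = setsum (phi1 @: A1) D1 /\
      phi1 @: D2 \subset D1 /\
      (D1 = [set 0] -> D2 = [set 0] ->
         forall x y, x \in A2 -> y \in A2 -> rho (x + y) = rho x + rho y) /\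
    (Uset A1 D1 phi1 = setX A1 D1 -> Uset A2 D2 phi2 = setX A2 D2 ->
         D1 = A2 /\ D2 = A1)).
Proof.
have eD2 := D2_eq hrho0 hD1 hA2 hphi2 hU.
split.
  apply/subsetP => a; rewrite eD2 !inE => /andP [-> /eqP ->].
  exact: addsubgroup0.
split; first by apply/subsetP => u; rewrite eD2 inE => /andP [].
split; first exact: A2_eq_setsum hD2 hU.
split; first by apply/subsetP => _ /imsetP [u + ->]; rewrite eD2 inE => /andP [].
split; first exact: rho_additive_on_A2 hA1 hD2 hphi1 hphi2 hU.
exact: (feistel_setX_swap hrho0 hA1 hD1 hA2 hD2 hU).
Qed.
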